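(* Define sequences of primes as follows. For a prime $a$, let $S(a)=(s(1),s(2),\dots)$ be the sequence with $s(1)=a$ and, for $j\ge 2$, $s(j)$ the largest prime less than $2s(j-1)$. Put $p^{(1)}=2$ and $B_1=S(2)$; inductively, for $k\ge 2$, let $p^{(k)}$ be the smallest prime not belonging to $B_1\cup\dots\cup B_{k-1}$, and put $B_k=S(p^{(k)})$. Call a prime $p$ an RPR-prime if, with $q$ the smallest prime greater than $p/2$, the open interval $(p,2q)$ contains a prime; let $(RPR)_n$ denote the $n$-th RPR-prime in increasing order. Then for every $n\ge 1$, $p^{(n)}=(RPR)_n$.
   Context: Equivalently (for odd $p=p_n$, $p_k$ the $k$-th prime), $p$ is an RPR-prime iff all integers $\frac{p+1}{2},\frac{p+3}{2},\dots,\frac{p_{n+1}-1}{2}$ are composite. The first RPR-primes are $2,11,17,29,41,47,59,67,71,97,101,107,109,127,\dots$. *)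

From mathcomp Require Import all_boot.
Set Implicit Arguments. Unset Strict Implicit. Unset Printing Implicit Defensive.

(* largest prime strictly less than m (0 if there is none; for m >= 3 one exists) *)
Definition prev_prime (m : nat) : nat := \max_(i < m | prime i) i.

(* S(a) = (s(1), s(2), ...) with 0-based index: seqS a j = s(j+1).
   s(1) = a, s(j) = largest prime < 2 s(j-1). *)
Fixpoint seqS (a j : nat) : nat :=
  if j is j'.+1 then prev_prime (2 * seqS a j') else a.

Definition inS (a q : nat) : Prop := exists j, seqS a j = q.

(* Specification of the sequence p^(1), p^(2), ... (indices k >= 1; P 0 unused):
   p^(1) = 2, and for k >= 2, p^(k) is the smallest prime not in B_1 u ... u B_{k-1},
   where B_i = S(p^(i)). *)
Definition pseq_spec (P : nat -> nat) : Prop :=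
  P 1 = 2 /\
  forall k, 2 <= k ->
    [/\ prime (P k),
        (forall i, 1 <= i < k -> ~ inS (P i) (P k)) &
        (forall q, prime q -> q < P k -> exists2 i, 1 <= i < k & inS (P i) q)].

Lemma half_prime_ex (p : nat) : exists q, prime q && (p < 2 * q).
Proof.
case: (prime_above p) => q ltpq pq; exists q; rewrite pq /=.
by apply: (leq_trans ltpq); rewrite mul2n -addnn leq_addr.
Qed.

Definition half_prime (p : nat) : nat := ex_minn (half_prime_ex p).

Definition rpr (p : nat) : bool :=
  prime p && [exists r : 'I_(2 * half_prime p), prime r && (p < r)].

Definition nth_rpr (n p : nat) : bool :=
  rpr p && (count rpr (iota 0 p) == n.-1).

(* Every prime lies in some S(a) with a an RPR-prime: if q is an odd prime that is
   not RPR and h is the smallest prime above q/2, then h < q by Bertrand's postulate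
   and q is the largest prime below 2h, so q follows h in S(h), and one inducts.
   Conversely a term of S(a) after a is the largest prime below 2s for a prime s, which
   is never RPR since the smallest prime above its half is at most s. Hence the greedy
   construction picks the RPR-primes one by one in increasing order.  The sequence is
   infinite because there are infinitely many RPR-primes: if no prime of (N, 2n] were
   RPR, the map p |-> smallest prime above p/2 would inject those primes into the
   primes of (N/2, n] up to one exception, bounding pi(2n) - pi(n) by N + 2, against
   Erdos's estimate on the central binomial coefficient that also yields Bertrand. *)

From mathcomp Require Import all_boot.
From mathcomp Require Import zify.
Set Implicit Arguments. Unset Strict Implicit. Unset Printing Implicit Defensive.

(** * Central binomial coefficients *)

Lemma divn_double n d : n.*2 %/ d = (n %/ d).*2 + (0 < d <= (n %% d).*2).
Proof. by case: d => [|d]; rewrite ?divn0 // -!addnn divnD. Qed.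

Lemma double_divn_le n d : (n %/ d).*2 <= n.*2 %/ d.
Proof. by rewrite divn_double leq_addr. Qed.

Lemma divn_double_sub_le1 n d : n.*2 %/ d - (n %/ d).*2 <= 1.
Proof. by rewrite divn_double addKn leq_b1. Qed.

Lemma divn_double_sub_small n d : n.*2 < d -> n.*2 %/ d - (n %/ d).*2 = 0.
Proof. by move=> lt_n2d; rewrite !divn_small //; lia. Qed.

Lemma logn_central_bin p n : prime p ->
  logn p 'C(n.*2, n) = \sum_(1 <= k < n.*2.+1) (n.*2 %/ p ^ k - (n %/ p ^ k).*2).
Proof.
move=> p_pr.
have logn_fact_n : logn p n`! = \sum_(1 <= k < n.*2.+1) n %/ p ^ k.
  have le_n_2n : n.+1 <= n.*2.+1 by rewrite ltnS -addnn leq_addr.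
  rewrite logn_fact // [RHS](big_cat_nat (n := n.+1)) //=.
  rewrite [X in _ + X]big1_seq ?addn0 // => k /andP[_].
  rewrite mem_index_iota => /andP[lt_nk _].
  rewrite divn_small //; apply: leq_trans (ltn_expl n (prime_gt1 p_pr)) _.
  by rewrite leq_exp2l ?(prime_gt1 p_pr) // ltnW.
have split_fact : logn p (n.*2)`! = logn p 'C(n.*2, n) + (logn p n`!).*2.
  rewrite -!addnn -(bin_fact (leq_addr n n)) addnK.
  by rewrite lognM ?bin_gt0 ?muln_gt0 ?fact_gt0 ?leq_addr // lognM ?fact_gt0.
rewrite sumnB => [|k _]; last exact: double_divn_le.
rewrite logn_fact // logn_fact_n in split_fact.
by rewrite split_fact -(big_morph double doubleD (id1 := 0) (erefl 0 : 0.*2 = 0)) addnK.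
Qed.

Lemma pfactor_central_bin_le p n : prime p -> 0 < n -> p ^ logn p 'C(n.*2, n) <= n.*2.
Proof.
move=> p_pr n_gt0; have p_gt1 := prime_gt1 p_pr.
have n2_gt0 : 0 < n.*2 by rewrite double_gt0.
set T := trunc_log p n.*2.
apply: leq_trans (trunc_logP p_gt1 n2_gt0); rewrite leq_exp2l // logn_central_bin //.
have le_T_2n : T.+1 <= n.*2.+1.
  by rewrite ltnS; apply: leq_trans (ltnW (ltn_expl T p_gt1)) (trunc_logP p_gt1 n2_gt0).
rewrite (big_cat_nat (n := T.+1)) //= [X in _ + X]big1_seq ?addn0; last first.
  move=> k /andP[_]; rewrite mem_index_iota => /andP[lt_Tk _].
  apply: divn_double_sub_small; apply: leq_trans (trunc_log_ltn _ p_gt1) _.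
  by rewrite leq_exp2l.
apply: (@leq_trans (\sum_(1 <= k < T.+1) 1)).
  exact: leq_sum (fun k _ => divn_double_sub_le1 n (p ^ k)).
by rewrite sum_nat_const_nat muln1 subn1.
Qed.

Lemma logn_central_bin_large p n : prime p -> n.*2 < p * p ->
  logn p 'C(n.*2, n) = n.*2 %/ p - (n %/ p).*2.
Proof.
move=> p_pr lt_2n_pp; rewrite logn_central_bin //.
case: n lt_2n_pp => [|n] lt_2n_pp; first by rewrite big_geq ?div0n.
rewrite (big_cat_nat (n := 2)) //= big_nat1 expn1 [X in _ + X]big1_seq ?addn0 //.
move=> k /andP[_]; rewrite mem_index_iota => /andP[le_2k _].
apply: divn_double_sub_small; apply: leq_trans lt_2n_pp _.
by rewrite mulnn leq_exp2l ?(prime_gt1 p_pr).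
Qed.

Lemma central_binS n : n.+1 * 'C(n.+1.*2, n.+1) = 2 * n.*2.+1 * 'C(n.*2, n).
Proof.
have := mul_bin_diag n.*2.+2 n; have := mul_bin_down n.*2.+1 n.
rewrite doubleS /= (_ : n.*2.+1 - n = n.+1); last lia.
set a := 'C(_.+2, _); set b := 'C(_.+1, n); set c := 'C(_, n).
rewrite -!addnn; lia.
Qed.

Lemma central_bin_lower n : 4 ^ n <= n.*2.+1 * 'C(n.*2, n).
Proof.
elim: n => [|n IH] //.
rewrite -(leq_pmul2l (ltn0Sn n)) mulnCA central_binS expnS doubleS.
set c := 'C(n.*2, n) in IH *; set x := 4 ^ n in IH *; nia.
Qed.

Lemma central_bin_upper n : 0 < n -> 2 * 'C(n.*2, n) <= 4 ^ n.
Proof.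
elim: n => [//|[|n] IH _] //; have {}IH := IH isT.
rewrite -(leq_pmul2l (ltn0Sn n.+1)) mulnCA central_binS expnS.
set c := 'C(_, _) in IH *; set x := 4 ^ _ in IH *; rewrite -!addnn; nia.
Qed.

Lemma middle_bin_odd_le k : 'C(k.*2.+1, k.+1) <= 4 ^ k.
Proof.
have := central_bin_upper (ltn0Sn k); rewrite doubleS binS expnS.
have -> : 'C(k.*2.+1, k) = 'C(k.*2.+1, k.+1).
  have sub_k : k.*2.+1 - k.+1 = k by lia.
  by rewrite -[X in 'C(_, X) = _]sub_k bin_sub // ltnS -addnn leq_addr.
lia.
Qed.

Definition primorial m := \prod_(0 <= i < m.+1 | prime i) i.

Lemma prime_ndvd_fact p k : prime p -> k < p -> ~~ (p %| k`!).
Proof.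
move=> p_pr lt_kp; rewrite -prime_coprime // coprime_sym.
rewrite fact_prod big_seq; apply: (big_ind (fun x => coprime x p)); first exact: coprime1n.
  by move=> x y; rewrite coprimeMl => -> ->.
move=> i; rewrite mem_index_iota => /andP[i_gt0 lt_ik].
by rewrite coprime_sym prime_coprime // gtnNdvd //; lia.
Qed.

(* The primes in (k + 1, 2k + 1] divide the numerator of 'C(2k + 1, k + 1) but not
   its denominator. *)
Lemma prod_primes_dvd_middle_bin k :
  \prod_(k.+2 <= i < k.*2.+2 | prime i) i %| 'C(k.*2.+1, k.+1).
Proof.
have le_k1_2k1 : k.+1 <= k.*2.+1 by rewrite ltnS -addnn leq_addr.
have prod_top : \prod_(k.+2 <= i < k.*2.+2) i = 'C(k.*2.+1, k.+1) * k`!.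
  have := bin_fact le_k1_2k1; rewrite (fact_split le_k1_2k1).
  rewrite (_ : k.*2.+1 - k.+1 = k); last lia.
  by move=> e; apply/eqP; rewrite -(eqn_pmul2l (fact_gt0 k.+1)) -e mulnCA.
rewrite -(@Gauss_dvdl _ _ k`!).
  by rewrite -prod_top [X in _ %| X](bigID prime) /= dvdn_mulr.
rewrite big_seq_cond; apply: (big_ind (fun x => coprime x k`!)); first exact: coprime1n.
  by move=> x y; rewrite coprimeMl => -> ->.
move=> i /andP[]; rewrite mem_index_iota => /andP[lt_ki _] i_pr.
by rewrite prime_coprime // prime_ndvd_fact //; lia.
Qed.

Lemma primorialS m :
  primorial m.+1 = primorial m * (if prime m.+1 then m.+1 else 1).
Proof. by rewrite /primorial big_mkcond big_nat_recr //= -big_mkcond. Qed.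

Lemma primorial_odd k :
  primorial k.*2.+1 = primorial k.+1 * \prod_(k.+2 <= i < k.*2.+2 | prime i) i.
Proof. by rewrite /primorial (big_cat_nat (n := k.+2)) //=; lia. Qed.

Lemma primorial_le m : primorial m <= 4 ^ m.
Proof.
elim/ltn_ind: m => -[|[|[|m]]] IH; try by rewrite /primorial unlock.
have [m_odd | m_even] := boolP (odd m).
  rewrite primorialS ifF ?muln1; last first.
    by apply/negP => /even_prime[// | /=]; rewrite m_odd.
  by apply: leq_trans (IH _ (ltnSn _)) _; rewrite leq_exp2l.
set k := (m./2).+1.
have def_m3 : m.+3 = k.*2.+1.
  by have := odd_double_half m; rewrite (negbTE m_even) /k -!addnn; lia.
rewrite def_m3 primorial_odd (_ : 4 ^ k.*2.+1 = 4 ^ k.+1 * 4 ^ k); last first.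
  by rewrite -expnD -addnn addSn.
apply: leq_mul; first by apply: IH; lia.
apply: leq_trans (middle_bin_odd_le k); apply: dvdn_leq (prod_primes_dvd_middle_bin k).
by rewrite bin_gt0 ltnS -addnn leq_addr.
Qed.

(** * Bertrand's postulate *)

Lemma divn_double_sub_mid n p : n.*2 < 3 * p -> p <= n -> n.*2 %/ p - (n %/ p).*2 = 0.
Proof.
move=> lt_2n_3p le_pn; rewrite divn_double addKn.
have -> : n %% p = n - p by rewrite -{1}(subnKC le_pn) modnDl modn_small //; lia.
by apply/eqP; rewrite eqb0 negb_and -ltnNge; apply/orP; right; lia.
Qed.

(* Primes up to sqrt(2n) contribute at most 2n, larger ones at most p and only if
   they lie in [1, 2n/3] or (n, 2n]. *)
Lemma pfactor_central_bin_bound p n s : 0 < n -> n.*2 < s.+1 * s.+1 ->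
  p ^ logn p 'C(n.*2, n) <=
  (if p <= s then n.*2 else 1) * (if prime p && (p <= n.*2 %/ 3) then p else 1) *
  (if prime p && (n < p <= n.*2) then n.*2 else 1).
Proof.
move=> n_gt0 lt_2n_ss; have n2_gt0 : 0 < n.*2 by rewrite double_gt0.
set a := (if p <= s then _ else _); set b := (if _ then p else 1).
set c := (if _ then n.*2 else 1).
have a_gt0 : 0 < a by rewrite /a; case: ifP.
have b_gt0 : 0 < b by rewrite /b; case: ifP => // /andP[/prime_gt0].
have c_gt0 : 0 < c by rewrite /c; case: ifP.
have abc_gt0 : 0 < a * b * c by rewrite !muln_gt0 a_gt0 b_gt0 c_gt0.
have [p_pr | p_npr] := boolP (prime p); last by rewrite lognE (negbTE p_npr).
have [le_ps | lt_sp] := leqP p s.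
  apply: leq_trans (pfactor_central_bin_le p_pr n_gt0) _.
  by rewrite -mulnA /a le_ps leq_pmulr // muln_gt0 b_gt0.
have lt_2n_pp : n.*2 < p * p by apply: leq_trans lt_2n_ss (leq_mul _ _).
rewrite logn_central_bin_large //.
have [-> // | /eqP digit_ne0] := eqVneq (n.*2 %/ p - (n %/ p).*2) 0.
have -> : n.*2 %/ p - (n %/ p).*2 = 1.
  by have := divn_double_sub_le1 n p; case: (_ - _) digit_ne0 => [|[|]].
rewrite expn1.
have [le_p_2n3 | lt_2n3_p] := leqP p (n.*2 %/ 3).
  by rewrite /b p_pr le_p_2n3 mulnAC leq_pmull // muln_gt0 a_gt0 c_gt0.
have [le_pn | lt_np] := leqP p n.
  by case: digit_ne0; apply: divn_double_sub_mid => //; rewrite mulnC -ltn_divLR.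
have [le_p2n | lt_2np] := leqP p n.*2.
  by rewrite /c p_pr lt_np le_p2n (leq_trans le_p2n) // leq_pmull // muln_gt0 a_gt0 b_gt0.
by case: digit_ne0; apply: divn_double_sub_small.
Qed.

Lemma prod_pfactor m N : 0 < m -> m < N -> \prod_(0 <= p < N) p ^ logn p m = m.
Proof.
move=> m_gt0 lt_mN; rewrite -[RHS](partnT m_gt0) /partn.
rewrite (big_cat_nat (n := m.+1)) //= [X in _ * X]big1_seq ?muln1.
  by apply: eq_bigl.
by move=> p /andP[_]; rewrite mem_index_iota => /andP[lt_mp _]; rewrite ltn_log0.
Qed.

Lemma prodn_const_count I r (P : pred I) c : \prod_(i <- r | P i) c = c ^ count P r.
Proof. by rewrite big_const_seq -Monoid.iteropE. Qed.

Lemma count_leq_iota s N : count (fun p => p <= s) (iota 0 N) <= s.+1.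
Proof.
rewrite -size_filter -(size_iota 0 s.+1) uniq_leq_size ?filter_uniq ?iota_uniq //.
by move=> p; rewrite mem_filter mem_iota mem_iota /= ltnS => /andP[->].
Qed.

Lemma count_iota_window (a : pred nat) m n N : n < N ->
  count (fun p => a p && (m < p <= n)) (iota 0 N) = count a (iota m.+1 (n - m)).
Proof.
move=> lt_nN; rewrite -!size_filter; apply/perm_size/uniq_perm.
- by rewrite filter_uniq ?iota_uniq.
- by rewrite filter_uniq ?iota_uniq.
move=> p; rewrite !mem_filter !mem_iota /=.
by case: (a p); rewrite //= ?andbF //; apply/idP/idP; lia.
Qed.

Definition nprimes_double n := count prime (iota n.+1 n).

Lemma erdos_inequality n s : 0 < n -> n.*2 < s.+1 * s.+1 ->
  4 ^ n <= n.*2.+1 * (n.*2 ^ s.+1 * 4 ^ (n.*2 %/ 3) * n.*2 ^ nprimes_double n).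
Proof.
move=> n_gt0 lt_2n_ss; have n2_gt0 : 0 < n.*2 by rewrite double_gt0.
apply: leq_trans (central_bin_lower n) _; rewrite leq_pmul2l //.
set C := 'C(n.*2, n); set N := C + n.*2.+1.
have C_gt0 : 0 < C by rewrite bin_gt0 -addnn leq_addr.
have lt_CN : C < N by rewrite /N addnS ltnS leq_addr.
have lt_2nN : n.*2 < N by rewrite /N addnS ltnS leq_addl.
rewrite -(prod_pfactor C_gt0 lt_CN).
apply: leq_trans (leq_prod (fun p _ => pfactor_central_bin_bound p n_gt0 lt_2n_ss)) _.
rewrite !big_split /= -!big_mkcond /= !prodn_const_count.
apply: leq_mul; first apply: leq_mul.
- by rewrite leq_pexp2l // count_leq_iota.
- apply: leq_trans (primorial_le _).
  rewrite /primorial [X in _ <= X](big_nat_widen 0 _ N) //.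
  exact: leq_ltn_trans (leq_div _ _) lt_2nN.
- by rewrite /index_iota subn0 count_iota_window // -addnn addKn.
Qed.

Lemma erdos_log_bound n s L : 0 < n -> n.*2 < s.+1 * s.+1 -> n.*2 < 2 ^ L ->
  n.*2 <= L + L * s.+1 + (n.*2 %/ 3).*2 + L * nprimes_double n.
Proof.
move=> n_gt0 lt_2n_ss lt_2n_2L.
have pow_2n e : n.*2 ^ e <= 2 ^ (L * e).
  by rewrite expnM; case: e => [|e] //; rewrite leq_exp2r // ltnW.
have pow4 m : 4 ^ m = 2 ^ m.*2 by rewrite -mul2n expnM.
rewrite -(leq_exp2l _ _ (ltnSn 1)) -pow4.
apply: leq_trans (erdos_inequality n_gt0 lt_2n_ss) _.
rewrite !expnD !mulnA -pow4.
by do 3!apply: leq_mul => //; apply: leq_mul.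
Qed.

Lemma square_lt_pow2 L : 14 <= L -> 49 * (L.+1 * L.+1) < 2 ^ L.
Proof.
elim: L => // L IH; rewrite leq_eqVlt => /orP[/eqP <- // | lt_14_L1].
by have := IH lt_14_L1; rewrite expnS; nia.
Qed.

(* With s the integer part of sqrt(2n) and 2n < 2 ^ L, the bound
   2n <= L (s + 2) + 4n/3 + L * pi forces pi > s - 2 as soon as s >= 7L. *)
Lemma nprimes_double_gt K n :
  2 ^ 13 <= n -> (K + 2) * (K + 2) <= n.*2 -> K < nprimes_double n.
Proof.
move=> large_n le_K2_2n; rewrite ltnNge; apply/negP => few_primes.
have [|s lt_2n_ss min_s] := ex_minnP (_ : exists s, n.*2 < s.+1 * s.+1).
  by exists n.*2; nia.
have le_ss_2n : s * s <= n.*2.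
  case: s lt_2n_ss min_s => // s _ min_s.
  by rewrite leqNgt; apply/negP => /min_s; rewrite ltnn.
set L := (trunc_log 2 n.*2).+1.
have lt_2n_2L : n.*2 < 2 ^ L by apply: trunc_log_ltn.
have le_2L_2n : 2 ^ L.-1 <= n.*2 by apply: trunc_logP => //; lia.
have le_14_L : 14 <= L.-1 by apply: trunc_log_max => //; rewrite expnS; lia.
have le_7L_s : 7 * L <= s.
  have := square_lt_pow2 le_14_L; rewrite prednK; nia.
have le_K2_s : K + 2 <= s by nia.
have n_gt0 : 0 < n by apply: leq_trans large_n.
have := erdos_log_bound n_gt0 lt_2n_ss lt_2n_2L.
have := leq_divM n.*2 3; have := leq_mul (leqnn L) few_primes.
have := leq_mul le_7L_s (leqnn s).
set T := n.*2 %/ 3; set pi := nprimes_double n; nia.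
Qed.

Lemma doubling_path_cover a c n :
  path (fun a b => (a < b) && (b <= a.*2)) a c -> a <= n < last a c ->
  exists2 p, p \in c & n < p <= n.*2.
Proof.
elim: c a => [|b c IH] a /=; first by lia.
move=> /andP[/andP[lt_ab le_b_2a] path_c] /andP[le_an lt_n_last].
have [lt_nb | le_bn] := ltnP n b.
  by exists b; rewrite ?mem_head // lt_nb; lia.
have [|p p_c lt_np] := IH b path_c; first by rewrite le_bn.
by exists p; rewrite // in_cons p_c orbT.
Qed.

(* Each prime is below twice its predecessor, so the chain settles n < 2 ^ 13. *)
Definition bertrand_chain :=
  [:: 3; 5; 7; 13; 23; 43; 83; 163; 317; 631; 1259; 2503; 5003; 9973].

Lemma bertrand n : 0 < n -> exists2 p, prime p & n < p <= n.*2.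
Proof.
move=> n_gt0; have [large_n | small_n] := leqP (2 ^ 13) n.
  have le_2n : 2 <= n by apply: leq_trans large_n.
  have /(nprimes_double_gt large_n) : (0 + 2) * (0 + 2) <= n.*2 by lia.
  rewrite -has_count => /hasP[p]; rewrite mem_iota => range_p p_pr.
  by exists p => //; lia.
have [lt_n2 | le_2n] := ltnP n 2; first by exists 2 => //; lia.
have chain_path : path (fun a b => (a < b) && (b <= a.*2)) 2 bertrand_chain by vm_compute.
have chain_primes : all prime bertrand_chain by vm_compute.
have chain_end : 2 ^ 13 <= last 2 bertrand_chain by vm_compute.
have [|p p_chain range_p] := doubling_path_cover (n := n) chain_path.
  by apply/andP; split; last exact: leq_trans small_n chain_end.
by exists p; first exact: (allP chain_primes p p_chain).
Qed.

(** * RPR-primes and the sequences S(a) *)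

Lemma prev_primeP m r : prime r -> r < m ->
  [/\ prime (prev_prime m), prev_prime m < m
     & forall q, prime q -> q < m -> q <= prev_prime m].
Proof.
move=> r_pr lt_rm; rewrite /prev_prime (bigmax_eq_arg (Ordinal lt_rm)) //.
case: arg_maxnP => //= i i_pr max_i; split => // q q_pr lt_qm.
exact: max_i (Ordinal lt_qm) q_pr.
Qed.

Lemma prev_prime_double s : prime s ->
  [/\ prime (prev_prime (2 * s)), prev_prime (2 * s) < 2 * s
     & forall q, prime q -> q < 2 * s -> q <= prev_prime (2 * s)].
Proof.
by move=> s_pr; apply: prev_primeP s_pr (ltn_Pmull _ (prime_gt0 s_pr)).
Qed.

Lemma seqS_prime a j : prime a -> prime (seqS a j).
Proof. by move=> a_pr; elim: j => //= j IH; have [] := prev_prime_double IH. Qed.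

Lemma seqSD a j k : seqS a (j + k) = seqS (seqS a j) k.
Proof. by elim: k => [|k IH]; rewrite ?addn0 // addnS /= IH. Qed.

Lemma inS_refl a : inS a a.
Proof. by exists 0. Qed.

Lemma inS_trans a b c : inS a b -> inS b c -> inS a c.
Proof. by move=> [j <-] [k <-]; exists (j + k); rewrite seqSD. Qed.

Lemma half_primeP p : [/\ prime (half_prime p), p < 2 * half_prime p &
  forall q, prime q -> p < 2 * q -> half_prime p <= q].
Proof.
rewrite /half_prime; case: ex_minnP => q /andP[q_pr lt_p_2q] min_q.
by split => // r r_pr lt_p_2r; apply: min_q; rewrite r_pr lt_p_2r.
Qed.

Lemma rprP p :
  reflect (prime p /\ exists2 r, prime r & p < r < 2 * half_prime p) (rpr p).
Proof.
apply: (iffP andP) =>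
  [[p_pr /existsP[r /andP[r_pr lt_pr]]] | [p_pr [r r_pr /andP[lt_pr lt_r]]]].
  by split => //; exists r => //; rewrite lt_pr ltn_ord.
by split => //; apply/existsP; exists (Ordinal lt_r); rewrite /= r_pr.
Qed.

Lemma rpr_prime p : rpr p -> prime p.
Proof. by case/andP. Qed.

Lemma rpr2 : rpr 2.
Proof.
have [hp_pr _ min_hp] := half_primeP 2.
have hp2 : half_prime 2 = 2 by apply/eqP; rewrite eqn_leq min_hp // prime_gt1.
by apply/rprP; split => //; exists 3; rewrite ?hp2.
Qed.

Lemma prev_prime_double_not_rpr s : prime s -> ~~ rpr (prev_prime (2 * s)).
Proof.
move=> s_pr; apply/rprP => -[_ [r r_pr /andP[lt_r1 lt_r2]]].
have [_ lt_s2s max_s] := prev_prime_double s_pr.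
have [_ _ min_hp] := half_primeP (prev_prime (2 * s)).
by have := min_hp s s_pr lt_s2s; have := max_s r r_pr; lia.
Qed.

Lemma rpr_inS r a : rpr r -> prime a -> inS a r -> r = a.
Proof.
move=> r_rpr a_pr [[|j] def_r] //.
case/negP: (prev_prime_double_not_rpr (seqS_prime j a_pr)).
by rewrite -[_ (2 * _)]/(seqS a j.+1) def_r.
Qed.

(* Bertrand's postulate gives a prime in (q/2, q), hence below q. *)
Lemma not_rpr_prev_prime_half q : prime q -> ~~ rpr q ->
  half_prime q < q /\ prev_prime (2 * half_prime q) = q.
Proof.
move=> q_pr q_nrpr; have [hp_pr lt_q_2hp min_hp] := half_primeP q.
have q_odd : odd q.
  by case: (even_prime q_pr) q_nrpr => // ->; rewrite rpr2.
have def_q := odd_double_half q; rewrite q_odd in def_q.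
have [|p p_pr /andP[lt_hq_p le_p_q]] := bertrand (n := q./2).
  by have := prime_gt1 q_pr; rewrite -def_q -addnn; lia.
split.
  apply: leq_ltn_trans (min_hp p p_pr _) _; rewrite -def_q -?addnn; lia.
have [fp_pr lt_fp max_fp] := prev_prime_double hp_pr.
apply/eqP; rewrite eqn_leq max_fp // andbT leqNgt; apply: contra q_nrpr => lt_q_fp.
by apply/rprP; split => //; exists (prev_prime (2 * half_prime q)); rewrite ?lt_q_fp.
Qed.

Lemma prime_inS_rpr q : prime q -> exists2 a, rpr a & a <= q /\ inS a q.
Proof.
elim/ltn_ind: q => q IH q_pr.
have [q_rpr | q_nrpr] := boolP (rpr q).
  by exists q => //; split; last exact: inS_refl.
have [lt_hp_q def_q] := not_rpr_prev_prime_half q_pr q_nrpr.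
have [hp_pr _ _] := half_primeP q.
have [a a_rpr [le_a_hp a_hp]] := IH _ lt_hp_q hp_pr.
exists a => //; split; first exact: leq_trans le_a_hp (ltnW lt_hp_q).
by apply: inS_trans a_hp _; exists 1.
Qed.

Lemma half_prime_ltn p1 p2 : prime p1 -> ~~ rpr p1 -> prime p2 -> p1 < p2 ->
  half_prime p1 < half_prime p2.
Proof.
move=> p1_pr p1_nrpr p2_pr lt_p12.
have [hp2_pr lt_p2 _] := half_primeP p2; have [_ _ min_hp1] := half_primeP p1.
rewrite ltn_neqAle min_hp1 ?andbT //; last exact: ltn_trans lt_p12 lt_p2.
apply: contra p1_nrpr => /eqP eq_hp.
by apply/rprP; split => //; exists p2; rewrite // lt_p12 eq_hp.
Qed.

(* On the non-RPR primes of (N, 2n], half_prime is injective, and it sends every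
   one of them except the largest to a prime q <= n with N < 2q. *)
Lemma count_primes_no_rpr N n : 0 < n ->
  (forall p, prime p -> N < p <= n.*2 -> ~~ rpr p) ->
  count prime (iota N.+1 (n.*2 - N))
    <= (count (fun q => prime q && (N < 2 * q)) (iota 0 n.+1)).+1.
Proof.
move=> n_gt0 no_rpr.
set A := [seq p <- iota N.+1 (n.*2 - N) | prime p].
set B := [seq q <- iota 0 n.+1 | prime q && (N < 2 * q)].
have mem_A p : (p \in A) = prime p && (N < p <= n.*2).
  by rewrite mem_filter mem_iota; congr (_ && _); apply/idP/idP; lia.
have lt_2_2n1 : 2 < n.*2.+1 by rewrite ltnS -addnn; lia.
have [pm_pr lt_pm max_pm] := prev_primeP (isT : prime 2) lt_2_2n1.
set pm := prev_prime _ in pm_pr lt_pm max_pm.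
have sub_hp : {subset map half_prime A <= half_prime pm :: B}.
  move=> y /mapP[p]; rewrite mem_A => /andP[p_pr range_p] ->{y}.
  have [lt_p_pm | eq_p_pm] : p < pm \/ p = pm.
    by have := max_pm p p_pr (_ : p < n.*2.+1); lia.
  - have [hp_pr lt_p_2hp _] := half_primeP p.
    have le_2hp_pm : 2 * half_prime p <= pm.
      rewrite leqNgt; apply: contra (no_rpr p p_pr range_p) => lt_pm_2hp.
      by apply/rprP; split => //; exists pm; rewrite // lt_p_pm.
    by rewrite in_cons mem_filter mem_iota hp_pr /= orbC; apply/orP; left; lia.
  - by rewrite eq_p_pm mem_head.
have uniq_hp : uniq (map half_prime A).
  rewrite map_inj_in_uniq ?filter_uniq ?iota_uniq // => x y.
  rewrite !mem_A => /andP[x_pr x_range] /andP[y_pr y_range] eq_hp.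
  case: (ltngtP x y) => // [lt_xy | lt_yx].
  - by have := half_prime_ltn x_pr (no_rpr x x_pr x_range) y_pr lt_xy; rewrite eq_hp ltnn.
  - by have := half_prime_ltn y_pr (no_rpr y y_pr y_range) x_pr lt_yx; rewrite eq_hp ltnn.
by have := uniq_leq_size uniq_hp sub_hp; rewrite size_map /= !size_filter.
Qed.

Lemma nprimes_double_no_rpr N n : N <= n ->
  (forall p, prime p -> N < p <= n.*2 -> ~~ rpr p) -> nprimes_double n <= N.+2.
Proof.
move=> le_Nn no_rpr; have [-> // | n_gt0] := posnP n.
have := count_primes_no_rpr n_gt0 no_rpr.
have -> : iota N.+1 (n.*2 - N) = iota N.+1 (n - N) ++ iota n.+1 n.
  by rewrite (_ : n.*2 - N = n - N + n) ?iotaD ?addSn ?subnKC //; lia.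
have -> : iota 0 n.+1 = iota 0 N.+1 ++ iota N.+1 (n - N).
  by rewrite -[in LHS](subnKC le_Nn) -addSn iotaD.
rewrite !count_cat -/(nprimes_double n).
have := count_size (fun q => prime q && (N < 2 * q)) (iota 0 N.+1).
have sub_pr : subpred (fun q => prime q && (N < 2 * q)) prime by move=> q /andP[].
have := sub_count sub_pr (iota N.+1 (n - N)).
set c := count prime (iota N.+1 (n - N)); rewrite size_iota; lia.
Qed.

Lemma rpr_unbounded N : exists p, rpr p && (N < p).
Proof.
set n := 2 ^ 13 + (N.+2 + 2) * (N.+2 + 2).
have [/hasP[p _ rpr_p] | /hasPn no_rpr] :=
  boolP (has (fun p => rpr p && (N < p)) (iota 0 n.*2.+1)); first by exists p.
have le_Nn : N <= n by rewrite /n; nia.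
have few_primes : nprimes_double n <= N.+2.
  apply: nprimes_double_no_rpr le_Nn _ => p p_pr /andP[lt_Np le_p_2n].
  have p_iota : p \in iota 0 n.*2.+1 by rewrite mem_iota.
  by apply: contra (no_rpr p p_iota) => rpr_p; rewrite rpr_p.
have large_n : (N.+2 + 2) * (N.+2 + 2) <= n.*2 by rewrite /n; lia.
by have := nprimes_double_gt (leq_addr _ _) large_n; rewrite ltnNge few_primes.
Qed.

(** * Enumerations of the RPR-primes *)

Definition enumerates_rpr (P : nat -> nat) : Prop :=
  [/\ forall k, 0 < k -> rpr (P k),
      forall i k, 0 < i -> i < k -> P i < P k
    & forall k r, 0 < k -> rpr r -> r < P k -> exists2 i, 0 < i < k & r = P i].

Section Enumeration.

Variable P : nat -> nat.
Hypothesis P_enum : enumerates_rpr P.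

Lemma enumerates_rpr_count n : count rpr (iota 0 (P n.+1)) = n.
Proof.
have [P_rpr P_mono P_below] := P_enum.
rewrite -size_filter -[RHS](size_iota 1 n) -[RHS](size_map P).
apply/perm_size/uniq_perm; first exact: filter_uniq (iota_uniq _ _).
  rewrite map_inj_in_uniq ?iota_uniq // => i j.
  rewrite !mem_iota => /andP[i_gt0 _] /andP[j_gt0 _].
  by case: (ltngtP i j) => // [/(P_mono _ _ i_gt0) | /(P_mono _ _ j_gt0)] + eq_P;
    rewrite eq_P ltnn.
move=> r; rewrite mem_filter mem_iota /=; apply/andP/mapP => [[rpr_r lt_r] | [i]].
  have [i /andP[i_gt0 lt_i] ->] := P_below _ _ (ltn0Sn n) rpr_r lt_r.
  by exists i; rewrite // mem_iota i_gt0 add1n.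
rewrite mem_iota add1n => /andP[i_gt0 lt_i] ->.
by rewrite P_rpr // P_mono.
Qed.

Lemma enumerates_rpr1 : P 1 = 2.
Proof.
have [P_rpr _ P_below] := P_enum.
have := prime_gt1 (rpr_prime (P_rpr 1 isT)); rewrite leq_eqVlt => /orP[/eqP // | lt_2P].
by have [i /andP[i_gt0 lt_i]] := P_below 1 2 isT rpr2 lt_2P; case: i i_gt0 lt_i.
Qed.

End Enumeration.

Lemma enumerates_pseq_spec P : enumerates_rpr P -> pseq_spec P.
Proof.
move=> P_enum; have [P_rpr P_mono P_below] := P_enum.
split=> [|k le_2k]; first exact: enumerates_rpr1.
have k_gt0 : 0 < k by apply: leq_trans le_2k.
split=> [|i /andP[i_gt0 lt_ik] in_Pk | q q_pr lt_q].
- exact: rpr_prime (P_rpr k k_gt0).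
- have := rpr_inS (P_rpr k k_gt0) (rpr_prime (P_rpr i i_gt0)) in_Pk.
  by move/eqP; rewrite gtn_eqF // P_mono.
- have [a a_rpr [le_aq in_a]] := prime_inS_rpr q_pr.
  have [i range_i def_a] := P_below k a k_gt0 a_rpr (leq_ltn_trans le_aq lt_q).
  by exists i; rewrite // -def_a.
Qed.

Section PseqSpec.

Variable P : nat -> nat.
Hypothesis P_spec : pseq_spec P.

Lemma pseq_prime k : 0 < k -> prime (P k).
Proof.
have [P1 P_next] := P_spec.
by case: k => [|[|k]] // _; [rewrite P1 | have [] := P_next k.+2 isT].
Qed.

Lemma pseq_notin i k : 0 < i < k -> ~ inS (P i) (P k).
Proof.
move=> range_i; have [i_gt0 lt_ik] := andP range_i.
by have [_ notin _] := P_spec.2 k (leq_ltn_trans i_gt0 lt_ik); apply: notin.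
Qed.

Lemma pseq_cover k q : 0 < k -> prime q -> q < P k -> exists2 i, 0 < i < k & inS (P i) q.
Proof.
have [P1 P_next] := P_spec.
case: k => [|[|k]] // _ q_pr; first by rewrite P1 ltnNge prime_gt1.
by have [_ _] := P_next k.+2 isT; apply.
Qed.

Lemma pseq_ltn i k : 0 < i -> i < k -> P i < P k.
Proof.
move=> i_gt0 lt_ik; have range_i : 0 < i < k by rewrite i_gt0.
case: (ltngtP (P i) (P k)) => // [lt_Pki | eq_P]; last first.
  by case: (pseq_notin range_i); rewrite eq_P; exact: inS_refl.
have Pk_pr := pseq_prime (ltn_trans i_gt0 lt_ik).
have [j /andP[j_gt0 lt_ji] in_Pj] := pseq_cover i_gt0 Pk_pr lt_Pki.
by case: (@pseq_notin j k); rewrite ?j_gt0 ?(ltn_trans lt_ji lt_ik).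
Qed.

Lemma pseq_below k r : 0 < k -> rpr r -> r < P k -> exists2 i, 0 < i < k & r = P i.
Proof.
move=> k_gt0 r_rpr lt_r; have [i range_i in_Pi] := pseq_cover k_gt0 (rpr_prime r_rpr) lt_r.
exists i => //; apply: rpr_inS r_rpr (pseq_prime _) in_Pi.
by case/andP: range_i.
Qed.

Lemma pseq_rpr k : 0 < k -> rpr (P k).
Proof.
move=> k_gt0; have [a a_rpr [le_a in_a]] := prime_inS_rpr (pseq_prime k_gt0).
case: (ltngtP a (P k)) le_a => // [lt_a _ | <- //].
have [i range_i def_a] := pseq_below k_gt0 a_rpr lt_a.
by case: (pseq_notin range_i); rewrite -def_a.
Qed.

Lemma pseq_spec_enumerates : enumerates_rpr P.
Proof. by split; [exact: pseq_rpr | exact: pseq_ltn | exact: pseq_below]. Qed.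

End PseqSpec.

Definition next_rpr x := ex_minn (rpr_unbounded x).

Lemma next_rprP x :
  [/\ rpr (next_rpr x), x < next_rpr x & forall p, rpr p -> x < p -> next_rpr x <= p].
Proof.
rewrite /next_rpr; case: ex_minnP => m /andP[m_rpr lt_xm] min_m.
by split => // p p_rpr lt_xp; apply: min_m; rewrite p_rpr.
Qed.

Fixpoint rpr_enum k := if k is k'.+1 then next_rpr (rpr_enum k') else 0.

Lemma rpr_enum_enumerates : enumerates_rpr rpr_enum.
Proof.
have rpr_enumS k : rpr_enum k < rpr_enum k.+1 by have [] := next_rprP (rpr_enum k).
split=> [[|k] // _ | i k _ | k r _ r_rpr].
- by have [] := next_rprP (rpr_enum k).
- elim: k => // k IH; rewrite ltnS leq_eqVlt => /orP[/eqP -> // | /IH lt_i].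
  exact: ltn_trans lt_i (rpr_enumS k).
elim: k => // k IH /= lt_r; have [_ lt_k min_k] := next_rprP (rpr_enum k).
case: (ltngtP r (rpr_enum k)) => [/IH [i /andP[i_gt0 lt_i] ->] | lt_kr | def_r].
- by exists i; rewrite // i_gt0 ltnW.
- by have := min_k r r_rpr lt_kr; rewrite leqNgt lt_r.
- case: k def_r {IH lt_k min_k lt_r} => [def_r | k ->]; last by exists k.+1; rewrite ?ltnSn.
  by move: r_rpr; rewrite def_r => /rpr_prime.
Qed.

Theorem theorem1 :
  (exists P : nat -> nat, pseq_spec P) /\
  (forall P : nat -> nat, pseq_spec P -> forall n : nat, 1 <= n -> nth_rpr n (P n)).
Proof.
split; first by exists rpr_enum; apply/enumerates_pseq_spec/rpr_enum_enumerates.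
move=> P /pseq_spec_enumerates P_enum [//|n] _.
have [P_rpr _ _] := P_enum.
by rewrite /nth_rpr P_rpr // (enumerates_rpr_count P_enum) eqxx.
Qed.
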